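(* Let $\beta\in\mathbb{N}=\{0,1,2,\dots\}$ and $\alpha\in\mathbb{D}\setminus\{0\}$. Let $\phi_\alpha(z)=\dfrac{\alpha-z}{1-\overline{\alpha}z}$ and, for each non-negative integer $n$, let $v_n:=C_{\phi_\alpha}^*z^n$, where $C_{\phi_\alpha}f=f\circ\phi_\alpha$ acts on $A^2_\beta$ and $^*$ denotes the adjoint in $A^2_\beta$. Then $\langle v_n,v_0\rangle=0$ whenever $n>2+\beta$.
   Context: $\mathbb{D}$ is the open unit disc. For $\beta>-1$, $A^2_\beta$ is the Hilbert space of analytic functions $f(z)=\sum_{n\ge0}\widehat f(n)z^n$ on $\mathbb{D}$ with inner product $\langle f,g\rangle=\sum_{n\ge0}\frac{n!\,\Gamma(2+\beta)}{\Gamma(n+2+\beta)}\widehat f(n)\overline{\widehat g(n)}$ (equivalently the $L^2$ inner product with respect to $(\beta+1)(1-|z|^2)^\beta dA(z)$). *)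

From Stdlib Require Import Reals Arith.
From Coquelicot Require Import Coquelicot.
Open Scope R_scope.

(* Weight of A^2_beta for beta a natural number:
   n! Gamma(2+beta) / Gamma(n+2+beta) = n! (beta+1)! / (n+beta+1)! *)
Definition wgt (beta n : nat) : R :=
  INR (fact n * fact (beta + 1)) / INR (fact (n + beta + 1)).

(* An element f(z) = sum a_n z^n of A^2_beta is represented by its Taylor
   coefficient sequence a; membership = finite norm. *)
Definition inA2 (beta : nat) (a : nat -> C) : Prop :=
  ex_series (fun n => wgt beta n * (Cmod (a n))^2).

Definition A2_inner_is (beta : nat) (a b : nat -> C) (l : C) : Prop :=
  is_series (fun n => (RtoC (wgt beta n) * (a n * Cconj (b n)))%C) l.

Definition monom (n : nat) : nat -> C :=
  fun k => if Nat.eqb k n then 1%C else 0%C.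

Definition phi (alpha z : C) : C :=
  ((alpha - z) / (1 - Cconj alpha * z))%C.

(* cg is the Taylor coefficient sequence of g o phi_alpha on the disc,
   i.e. cg represents C_{phi_alpha} g. *)
Definition comp_coeffs (alpha : C) (g cg : nat -> C) : Prop :=
  forall z : C, Cmod z < 1 ->
    exists w : C, is_pseries g (phi alpha z) w /\ is_pseries cg z w.

Definition is_comp_adjoint (beta : nat) (alpha : C) (f v : nat -> C) : Prop :=
  inA2 beta v /\
  forall g cg : nat -> C, inA2 beta g -> comp_coeffs alpha g cg ->
    exists l : C, A2_inner_is beta g v l /\ A2_inner_is beta cg f l.

From Stdlib Require Import Reals Lia Lra.
From Coquelicot Require Import Coquelicot.
Open Scope R_scope.

(* Pairing with monomials identifies v_0 = C_phi^* 1 with the reproducing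
   kernel K(z) = (1 - conj(alpha) z)^-(beta+2) of A^2_beta at alpha, because
   <z^j, v_0> = <phi^j, 1> = phi(0)^j = alpha^j.  Since
   1 - conj(alpha) phi(z) = (1 - |alpha|^2) / (1 - conj(alpha) z), the function
   K o phi is a polynomial of degree beta + 2, so
   <v_n, v_0> = conj <C_phi v_0, z^n> = 0 as soon as n > beta + 2. *)

Lemma sum_n_single {G : AbelianMonoid} (f : nat -> G) k :
  (forall j, j <> k -> f j = zero) ->
  forall N, sum_n f N = if Nat.leb k N then f k else zero.
Proof.
  intros Hf N; induction N as [|N IH].
  - rewrite sum_O. destruct k; simpl; [reflexivity | apply Hf; lia].
  - rewrite sum_Sn, IH.
    destruct (Nat.leb_spec k N), (Nat.leb_spec k (S N)); try lia.
    + rewrite (Hf (S N)) by lia. apply plus_zero_r.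
    + replace k with (S N) by lia. apply plus_zero_l.
    + rewrite (Hf (S N)) by lia. apply plus_zero_l.
Qed.

Lemma is_series_single {K : AbsRing} {V : NormedModule K} (f : nat -> V) k :
  (forall j, j <> k -> f j = zero) -> is_series f (f k).
Proof.
  intros Hf. unfold is_series.
  apply filterlim_ext_loc with (fun _ => f k); [| apply filterlim_const].
  exists k. intros N HN. rewrite (sum_n_single f k Hf N).
  now rewrite (proj2 (Nat.leb_le k N) HN).
Qed.

Lemma is_series_uniq {K : AbsRing} {V : NormedModule K} (f : nat -> V) l1 l2 :
  is_series f l1 -> is_series f l2 -> l1 = l2.
Proof. exact (filterlim_locally_unique _ _ _). Qed.

Lemma is_series_single_uniq {K : AbsRing} {V : NormedModule K} (f : nat -> V) k l :
  (forall j, j <> k -> f j = zero) -> is_series f l -> l = f k.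
Proof. intros Hf Hl. exact (is_series_uniq f _ _ Hl (is_series_single f k Hf)). Qed.

Lemma Cconj_RtoC (r : R) : Cconj (RtoC r) = RtoC r.
Proof. apply injective_projections; simpl; ring. Qed.

Lemma sum_n_Cconj (f : nat -> C) N :
  sum_n (fun n => Cconj (f n)) N = Cconj (sum_n f N).
Proof.
  induction N as [|N IH].
  - now rewrite !sum_O.
  - rewrite !sum_Sn, IH. symmetry. apply Cplus_conj.
Qed.

Lemma is_series_Cconj (f : nat -> C) l :
  is_series f l -> is_series (fun n => Cconj (f n)) (Cconj l).
Proof.
  intros H. unfold is_series.
  apply filterlim_ext with (fun N => Cconj (sum_n f N)).
  { intro N. symmetry. apply sum_n_Cconj. }
  apply filterlim_comp with (1 := H). apply filterlim_locally.
  intros eps. exists eps. intros y [H1 H2]. split; [exact H1 |].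
  revert H2. unfold ball; simpl. unfold AbsRing_ball, abs, minus, plus, opp; simpl.
  replace (- snd y + - - snd l) with (- (snd y + - snd l)) by ring.
  now rewrite Rabs_Ropp.
Qed.

Lemma pow_n_Cpow (x : C) k : pow_n x k = (x ^ k)%C.
Proof. induction k as [|k IH]; simpl; [reflexivity | now rewrite IH]. Qed.

Lemma is_pseries_uniq {K : AbsRing} {V : NormedModule K} (a : nat -> V) x l1 l2 :
  is_pseries a x l1 -> is_pseries a x l2 -> l1 = l2.
Proof. apply is_series_uniq. Qed.

Lemma is_pseries_monom k (x : C) : is_pseries (monom k) x (x ^ k)%C.
Proof.
  unfold is_pseries. rewrite <- pow_n_Cpow.
  replace (pow_n x k) with (scal (pow_n x k) (monom k k)).
  - apply (is_series_single (fun j => scal (pow_n x j) (monom k j))).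
    intros j Hj. unfold monom.
    rewrite (proj2 (Nat.eqb_neq j k) Hj). exact (scal_zero_r _).
  - unfold monom. rewrite Nat.eqb_refl. exact (mult_one_r _).
Qed.

Definition lin_mul (c0 c1 : C) (a : nat -> C) : nat -> C :=
  PS_plus (PS_scal c0 a) (PS_scal c1 (PS_incr_1 a)).

Lemma lin_mul_0 c0 c1 a : lin_mul c0 c1 a O = (c0 * a O)%C.
Proof. change (c0 * a O + c1 * 0 = c0 * a O)%C. ring. Qed.

Lemma lin_mul_S c0 c1 a j : lin_mul c0 c1 a (S j) = (c0 * a (S j) + c1 * a j)%C.
Proof. reflexivity. Qed.

Lemma is_pseries_lin_mul c0 c1 (a : nat -> C) x l :
  is_pseries a x l -> is_pseries (lin_mul c0 c1 a) x ((c0 + c1 * x) * l)%C.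
Proof.
  intros Ha.
  replace ((c0 + c1 * x) * l)%C with (plus (scal c0 l) (scal c1 (scal x l)))
    by (change (c0 * l + c1 * (x * l) = (c0 + c1 * x) * l)%C; ring).
  exact (is_pseries_plus _ _ _ _ _
           (is_pseries_scal c0 a x l (Cmult_comm _ _) Ha)
           (is_pseries_scal c1 _ x _ (Cmult_comm _ _) (is_pseries_incr_1 a x l Ha))).
Qed.

Lemma is_pseries_iter_lin_mul c0 c1 (a : nat -> C) x l m :
  is_pseries a x l ->
  is_pseries (Nat.iter m (lin_mul c0 c1) a) x ((c0 + c1 * x) ^ m * l)%C.
Proof.
  intros Ha. induction m as [|m IH]; simpl.
  - now rewrite Cmult_1_l.
  - rewrite <- Cmult_assoc. now apply is_pseries_lin_mul.
Qed.

Lemma iter_lin_mul_0 c0 c1 a m :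
  Nat.iter m (lin_mul c0 c1) a O = (c0 ^ m * a O)%C.
Proof.
  induction m as [|m IH]; simpl.
  - now rewrite Cmult_1_l.
  - rewrite lin_mul_0, IH. apply Cmult_assoc.
Qed.

Lemma iter_lin_mul_high c0 c1 (a : nat -> C) d m j :
  (forall i, (d < i)%nat -> a i = 0%C) -> (d + m < j)%nat ->
  Nat.iter m (lin_mul c0 c1) a j = 0%C.
Proof.
  intros Ha. revert j. induction m as [|m IH]; intros j Hj; simpl.
  - apply Ha. lia.
  - destruct j as [|j]; [lia |].
    rewrite lin_mul_S, !IH by lia. ring.
Qed.

Lemma is_pseries_rescale (a : nat -> C) c x l :
  is_pseries a (c * x)%C l -> is_pseries (fun i => c ^ i * a i)%C x l.
Proof.
  apply is_series_ext. intro i.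
  change ((pow_n (c * x)%C i) * a i = pow_n x i * (c ^ i * a i))%C.
  rewrite (pow_n_Cpow (c * x)), (pow_n_Cpow x), Cpow_mult_l. ring.
Qed.

(* The Taylor coefficients C(j+k-1, j) of (1 - x)^-k.  The case k = 0 is
   separate because [Binomial.C n j] does not vanish for j > n. *)
Definition negbin (k j : nat) : R :=
  match k with
  | O => if Nat.eqb j 0 then 1 else 0
  | S m => Binomial.C (j + m) j
  end.

Lemma negbin_0_r k : negbin k 0 = 1.
Proof. destruct k; simpl; [reflexivity | apply C_n_0]. Qed.

Lemma negbin_pascal k j : negbin (S k) (S j) = negbin (S k) j + negbin k (S j).
Proof.
  destruct k as [|m]; simpl.
  - rewrite !Nat.add_0_r, !C_n_n. ring.
  - rewrite <- (pascal (j + S m) j) by lia.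
    replace (S (j + m)) with (j + S m)%nat by lia. ring.
Qed.

Lemma lin_mul_negbin k j :
  lin_mul 1 (-1) (fun i => RtoC (negbin (S k) i)) j = RtoC (negbin k j).
Proof.
  destruct j as [|j].
  - rewrite lin_mul_0, !negbin_0_r. ring.
  - rewrite lin_mul_S, negbin_pascal, RtoC_plus. ring.
Qed.

Lemma binom_pos n k : 0 < Binomial.C n k.
Proof.
  unfold Binomial.C. apply Rdiv_lt_0_compat.
  - apply INR_fact_lt_0.
  - apply Rmult_lt_0_compat; apply INR_fact_lt_0.
Qed.

Lemma binom_diag_succ j m :
  Binomial.C (S j + m) (S j) * INR (S j) = Binomial.C (j + m) j * INR (S j + m).
Proof.
  unfold Binomial.C.
  replace (S j + m - S j)%nat with m by lia.
  replace (j + m - j)%nat with m by lia.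
  replace (S j + m)%nat with (S (j + m)) by lia.
  rewrite !fact_simpl, !mult_INR.
  assert (H1 := INR_fact_neq_0 j). assert (H2 := INR_fact_neq_0 m).
  assert (H3 := INR_fact_neq_0 (j + m)).
  assert (H4 : INR (S j) <> 0) by (apply not_0_INR; lia).
  field. auto.
Qed.

Lemma is_lim_seq_inv_succ : is_lim_seq (fun j => / INR (S j)) 0.
Proof.
  replace (Finite 0) with (Rbar_inv p_infty) by reflexivity.
  apply is_lim_seq_inv; [| discriminate].
  apply is_lim_seq_incr_1 with (u := INR). apply is_lim_seq_INR.
Qed.

Lemma ex_series_binom_geom m r : 0 < r < 1 ->
  ex_series (fun j => Binomial.C (j + m) j * r ^ j).
Proof.
  intros Hr.
  assert (Hterm : forall j, 0 < Binomial.C (j + m) j * r ^ j)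
    by (intro j; apply Rmult_lt_0_compat; [apply binom_pos | apply pow_lt; lra]).
  apply ex_series_ext with (fun j => Rabs (Binomial.C (j + m) j * r ^ j)).
  { intro j. apply Rabs_pos_eq, Rlt_le, Hterm. }
  apply ex_series_DAlembert with r; [lra | intro j; apply Rgt_not_eq, Hterm |].
  apply is_lim_seq_ext with (fun j => (1 + INR m * / INR (S j)) * r).
  - intro j.
    rewrite Rabs_pos_eq by exact (Rlt_le _ _ (Rdiv_lt_0_compat _ _ (Hterm _) (Hterm _))).
    assert (HS : 0 < INR (S j)) by (apply lt_0_INR; lia).
    assert (Hb := binom_pos (j + m) j).
    assert (Hrj : 0 < r ^ j) by (apply pow_lt; lra).
    replace (Binomial.C (S j + m) (S j))
      with (Binomial.C (j + m) j * INR (S j + m) / INR (S j))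
      by (rewrite <- binom_diag_succ; field; lra).
    rewrite plus_INR. simpl pow. field. repeat split; lra.
  - replace (Finite r) with (Rbar_mult (Rbar_plus 1 (Rbar_mult (INR m) 0)) r)
      by (simpl; f_equal; ring).
    apply is_lim_seq_mult'; [| apply is_lim_seq_const].
    apply is_lim_seq_plus'; [apply is_lim_seq_const |].
    apply is_lim_seq_mult'; [apply is_lim_seq_const | apply is_lim_seq_inv_succ].
Qed.

Lemma Cminus_1_neq_0 (x : C) : Cmod x < 1 -> (1 - x)%C <> 0%C.
Proof.
  intros Hx E.
  assert (x = 1%C) by (replace x with (1 - (1 - x))%C by ring; rewrite E; ring).
  subst. rewrite Cmod_1 in Hx. lra.
Qed.

Lemma ex_pseries_negbin_S k (x : C) : Cmod x < 1 ->
  ex_pseries (fun j => RtoC (negbin (S k) j)) x.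
Proof.
  intros Hx. set (r := (1 + Cmod x) / 2).
  assert (Hx0 := Cmod_ge_0 x).
  apply (@ex_series_le C_AbsRing C_CompleteNormedModule)
    with (fun j => Binomial.C (j + k) j * r ^ j).
  - intro j.
    change (Cmod (pow_n x j * RtoC (negbin (S k) j))%C <= Binomial.C (j + k) j * r ^ j).
    rewrite Cmod_mult, pow_n_Cpow, Cmod_pow, Cmod_R. simpl negbin.
    rewrite Rabs_pos_eq by apply Rlt_le, binom_pos.
    rewrite Rmult_comm. apply Rmult_le_compat_l; [apply Rlt_le, binom_pos |].
    apply pow_incr. unfold r. lra.
  - apply ex_series_binom_geom. unfold r. lra.
Qed.

Lemma is_pseries_negbin k (x : C) : Cmod x < 1 ->
  is_pseries (fun j => RtoC (negbin k j)) x (/ (1 - x) ^ k)%C.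
Proof.
  intros Hx. assert (Hnz := Cminus_1_neq_0 x Hx).
  induction k as [|k IH].
  - replace (/ (1 - x) ^ 0)%C with (x ^ 0)%C by (simpl; field).
    apply is_pseries_ext with (monom 0); [| apply is_pseries_monom].
    intro j. unfold monom. simpl. now destruct (Nat.eqb j 0).
  - destruct (ex_pseries_negbin_S k x Hx) as [L HL]. change C in L.
    assert (E : ((1 + -1 * x) * L)%C = (/ (1 - x) ^ k)%C).
    { apply (is_pseries_uniq (fun j => RtoC (negbin k j)) x); [| exact IH].
      exact (is_pseries_ext _ _ _ _ (lin_mul_negbin k) (is_pseries_lin_mul 1 (-1) _ x L HL)). }
    replace (/ (1 - x) ^ S k)%C with L; [exact HL |].
    assert (Hk := Cpow_nz _ k Hnz).
    transitivity ((1 + -1 * x) * L / (1 - x))%C; [field; exact Hnz |].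
    rewrite E. simpl. field. auto.
Qed.

Lemma is_pseries_negbin_scaled k (c x : C) : Cmod (c * x) < 1 ->
  is_pseries (fun j => c ^ j * RtoC (negbin k j))%C x (/ (1 - c * x) ^ k)%C.
Proof. intros H. apply is_pseries_rescale, is_pseries_negbin, H. Qed.

Lemma Cpow_div (a b : C) n : b <> 0%C -> ((a / b) ^ n = a ^ n / b ^ n)%C.
Proof. intros Hb. unfold Cdiv. now rewrite Cpow_mult_l, Cpow_inv. Qed.

Lemma Cmod_mult_lt_1 (a b : C) : Cmod a < 1 -> Cmod b < 1 -> Cmod (a * b) < 1.
Proof.
  intros Ha Hb. rewrite Cmod_mult.
  assert (Ha0 := Cmod_ge_0 a). assert (Hb0 := Cmod_ge_0 b). nra.
Qed.

Lemma Cmod_lt_1_iff (x : C) : Cmod x < 1 <-> fst x ^ 2 + snd x ^ 2 < 1.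
Proof.
  unfold Cmod. split; intro H.
  - apply sqrt_lt_0_alt. now rewrite sqrt_1.
  - rewrite <- sqrt_1. apply sqrt_lt_1_alt. split; [nra | exact H].
Qed.

Lemma Cmod_phi_lt_1 (alpha z : C) :
  Cmod alpha < 1 -> Cmod z < 1 -> Cmod (phi alpha z) < 1.
Proof.
  intros Ha Hz.
  assert (Hd : (1 - Cconj alpha * z)%C <> 0%C).
  { apply Cminus_1_neq_0, Cmod_mult_lt_1; [rewrite Cmod_conj |]; assumption. }
  unfold phi. rewrite Cmod_div by exact Hd.
  apply (Rdiv_lt_1 _ _ (proj1 (Cmod_gt_0 _) Hd)).
  apply Cmod_lt_1_iff in Ha, Hz.
  destruct alpha as [a1 a2], z as [z1 z2]. unfold Cmod. simpl in *.
  rewrite !Rmult_1_r in *. apply sqrt_lt_1_alt.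
  split; [apply Rplus_le_le_0_compat; apply Rle_0_sqr |].
  (* |1 - conj(a) z|^2 - |a - z|^2 = (1 - |a|^2) (1 - |z|^2) *)
  assert (0 < (1 - (a1 * a1 + a2 * a2)) * (1 - (z1 * z1 + z2 * z2)))
    by (apply Rmult_lt_0_compat; lra).
  nra.
Qed.

Lemma wgt_pos beta j : 0 < wgt beta j.
Proof.
  unfold wgt. rewrite mult_INR.
  apply Rdiv_lt_0_compat; [apply Rmult_lt_0_compat |]; apply INR_fact_lt_0.
Qed.

Lemma RtoC_wgt_neq_0 beta j : RtoC (wgt beta j) <> 0%C.
Proof. intro E. apply RtoC_inj in E. pose proof (wgt_pos beta j). lra. Qed.

Lemma wgt_0 beta : wgt beta 0 = 1.
Proof.
  unfold wgt. rewrite Nat.mul_1_l, Nat.add_0_l. field. apply INR_fact_neq_0.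
Qed.

Lemma negbin_wgt beta j : negbin (S (S beta)) j = / wgt beta j.
Proof.
  unfold wgt, negbin, Binomial.C.
  replace (j + S beta - j)%nat with (beta + 1)%nat by lia.
  replace (j + beta + 1)%nat with (j + S beta)%nat by lia.
  rewrite mult_INR.
  assert (H1 := INR_fact_neq_0 j). assert (H2 := INR_fact_neq_0 (beta + 1)).
  assert (H3 := INR_fact_neq_0 (j + S beta)).
  field. auto.
Qed.

Lemma inA2_monom beta j : inA2 beta (monom j).
Proof.
  exists (wgt beta j * Cmod (monom j j) ^ 2).
  apply (is_series_single (fun i => wgt beta i * Cmod (monom j i) ^ 2)).
  intros i Hi. unfold monom.
  rewrite (proj2 (Nat.eqb_neq i j) Hi), Cmod_0. unfold zero. simpl. ring.
Qed.

Lemma A2_inner_monom_l beta j (b : nat -> C) l :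
  A2_inner_is beta (monom j) b l -> l = (wgt beta j * Cconj (b j))%C.
Proof.
  intros H. apply (is_series_single_uniq _ j) in H.
  - rewrite H. unfold monom. rewrite Nat.eqb_refl. now rewrite Cmult_1_l.
  - intros i Hi. unfold monom. rewrite (proj2 (Nat.eqb_neq i j) Hi).
    change (wgt beta i * (0 * Cconj (b i)) = 0)%C. ring.
Qed.

Lemma A2_inner_monom_r beta (a : nat -> C) j l :
  A2_inner_is beta a (monom j) l -> l = (wgt beta j * a j)%C.
Proof.
  intros H. apply (is_series_single_uniq _ j) in H.
  - rewrite H. unfold monom. rewrite Nat.eqb_refl, Cconj_RtoC. now rewrite Cmult_1_r.
  - intros i Hi. unfold monom. rewrite (proj2 (Nat.eqb_neq i j) Hi), Cconj_RtoC.
    change (wgt beta i * (a i * 0) = 0)%C. ring.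
Qed.

Lemma A2_inner_conj beta (a b : nat -> C) l :
  A2_inner_is beta a b l -> A2_inner_is beta b a (Cconj l).
Proof.
  intros H. apply is_series_Cconj in H. revert H. apply is_series_ext. intro i.
  rewrite !Cmult_conj, Cconj_conj, Cconj_RtoC.
  (* [ring] needs the equation at type [C], not at [C_NormedModule] *)
  match goal with |- ?a = ?b => change (@eq C a b) end. ring.
Qed.

Lemma comp_coeffs_ext alpha (g g' cg : nat -> C) :
  (forall j, g j = g' j) -> comp_coeffs alpha g cg -> comp_coeffs alpha g' cg.
Proof.
  intros Hg H z Hz. destruct (H z Hz) as [w [Hw Hcw]].
  exists w. split; [exact (is_pseries_ext _ _ _ _ Hg Hw) | exact Hcw].
Qed.

Lemma comp_coeffs_monom alpha j : Cmod alpha < 1 ->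
  comp_coeffs alpha (monom j)
    (Nat.iter j (lin_mul alpha (-1)) (fun i => Cconj alpha ^ i * RtoC (negbin j i))%C).
Proof.
  intros Ha z Hz. exists (phi alpha z ^ j)%C. split; [apply is_pseries_monom |].
  assert (Haz : Cmod (Cconj alpha * z) < 1)
    by (apply Cmod_mult_lt_1; [rewrite Cmod_conj |]; assumption).
  replace (phi alpha z ^ j)%C with ((alpha + -1 * z) ^ j * / (1 - Cconj alpha * z) ^ j)%C.
  - exact (is_pseries_iter_lin_mul _ _ _ _ _ j (is_pseries_negbin_scaled j _ z Haz)).
  - unfold phi. rewrite Cpow_div by exact (Cminus_1_neq_0 _ Haz).
    replace (alpha + -1 * z)%C with (alpha - z)%C by ring. reflexivity.
Qed.

(* Coefficients of the reproducing kernel (1 - conj(alpha) z)^-(beta+2). *)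
Definition repr_kernel (beta : nat) (alpha : C) (j : nat) : C :=
  (Cconj alpha ^ j / RtoC (wgt beta j))%C.

Lemma comp_adjoint_monom_0 beta alpha v : Cmod alpha < 1 ->
  is_comp_adjoint beta alpha (monom 0) v -> forall j, v j = repr_kernel beta alpha j.
Proof.
  intros Ha [_ Hv] j.
  destruct (Hv _ _ (inA2_monom beta j) (comp_coeffs_monom alpha j Ha)) as [l [Hl Hl']].
  apply A2_inner_monom_l in Hl. apply A2_inner_monom_r in Hl'.
  rewrite iter_lin_mul_0, negbin_0_r, wgt_0, Hl in Hl'.
  assert (Hw := RtoC_wgt_neq_0 beta j).
  assert (Hconj : Cconj (v j) = (alpha ^ j / RtoC (wgt beta j))%C).
  { transitivity (RtoC (wgt beta j) * Cconj (v j) / RtoC (wgt beta j))%C;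
      [field; exact Hw |].
    rewrite Hl'. field. exact Hw. }
  rewrite <- (Cconj_conj (v j)), Hconj, Cdiv_conj, Cpow_conj, Cconj_RtoC by exact Hw.
  reflexivity.
Qed.

(* Coefficients of ((1 - conj(alpha) z) / (1 - |alpha|^2))^(beta+2), the
   kernel composed with phi_alpha. *)
Definition kernel_comp_coeffs (beta : nat) (alpha : C) : nat -> C :=
  Nat.iter (S (S beta)) (lin_mul 1 (- Cconj alpha))
    (PS_scal (/ (1 - alpha * Cconj alpha) ^ S (S beta))%C (monom 0)).

Lemma kernel_comp_coeffs_high beta alpha n : (S (S beta) < n)%nat ->
  kernel_comp_coeffs beta alpha n = 0%C.
Proof.
  intros Hn. apply (iter_lin_mul_high _ _ _ 0); [| lia].
  intros i Hi. unfold PS_scal, monom.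
  rewrite (proj2 (Nat.eqb_neq i 0)) by lia. apply Cmult_0_r.
Qed.

Lemma comp_coeffs_repr_kernel beta alpha : Cmod alpha < 1 ->
  comp_coeffs alpha (repr_kernel beta alpha) (kernel_comp_coeffs beta alpha).
Proof.
  intros Ha z Hz. set (m := S (S beta)). set (c := (1 - alpha * Cconj alpha)%C).
  assert (Ha' : Cmod (Cconj alpha) < 1) by now rewrite Cmod_conj.
  assert (Hd := Cminus_1_neq_0 _ (Cmod_mult_lt_1 _ _ Ha' Hz)).
  assert (Hc : c <> 0%C) by exact (Cminus_1_neq_0 _ (Cmod_mult_lt_1 _ _ Ha Ha')).
  exists (/ (1 - Cconj alpha * phi alpha z) ^ m)%C. split.
  - apply is_pseries_ext with (fun i => Cconj alpha ^ i * RtoC (negbin m i))%C.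
    { intro i. unfold repr_kernel, m.
      rewrite negbin_wgt, RtoC_inv by apply Rgt_not_eq, wgt_pos. reflexivity. }
    apply is_pseries_negbin_scaled, Cmod_mult_lt_1; [exact Ha' |].
    apply Cmod_phi_lt_1; assumption.
  - assert (E : (1 - Cconj alpha * phi alpha z = c / (1 - Cconj alpha * z))%C)
      by (unfold phi, c; field; exact Hd).
    replace (/ (1 - Cconj alpha * phi alpha z) ^ m)%C
      with ((1 + - Cconj alpha * z) ^ m * scal (/ c ^ m)%C (z ^ 0)%C)%C.
    + apply is_pseries_iter_lin_mul.
      exact (is_pseries_scal _ _ z _ (Cmult_comm _ _) (is_pseries_monom 0 z)).
    + rewrite E, Cpow_div by exact Hd.
      change ((1 + - Cconj alpha * z) ^ m * (/ c ^ m * 1)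
              = / (c ^ m / (1 - Cconj alpha * z) ^ m))%C.
      replace (1 + - Cconj alpha * z)%C with (1 - Cconj alpha * z)%C by ring.
      field. split; apply Cpow_nz; assumption.
Qed.

Theorem lemma5p1 (beta : nat) (alpha : C) (n : nat) (vn v0 : nat -> C) :
  0 < Cmod alpha < 1 ->
  (2 + beta < n)%nat ->
  is_comp_adjoint beta alpha (monom n) vn ->
  is_comp_adjoint beta alpha (monom 0) v0 ->
  A2_inner_is beta vn v0 0%C.
Proof.
  intros [_ Ha] Hn [_ Hvn] Hv0.
  assert (Hker := comp_adjoint_monom_0 beta alpha v0 Ha Hv0).
  assert (Hcomp : comp_coeffs alpha v0 (kernel_comp_coeffs beta alpha)).
  { apply comp_coeffs_ext with (repr_kernel beta alpha);
      [intro j; symmetry; apply Hker | now apply comp_coeffs_repr_kernel]. }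
  destruct (Hvn v0 _ (proj1 Hv0) Hcomp) as [l [Hl Hl']].
  apply A2_inner_monom_r in Hl'.
  rewrite kernel_comp_coeffs_high, Cmult_0_r in Hl' by lia. subst l.
  rewrite <- Cconj_RtoC. now apply A2_inner_conj.
Qed.
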